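(* Let $(G,t)$ be a non-trivial problem instance, $X$ a modulator of $G$, $C$ a connected component of $G-X$, $T$ the block-cut tree of $C$, and $B$ a block of $C$ that is a leaf of $T$ with unique neighbour $a$ in $T$. Let $W=N_G(V(B)\setminus\{a\})\setminus\{a\}$. Suppose $W$ is a limit-1 subset for $(G-V(B),t)$ and every $x\in W$ satisfies $\mathrm{tw}\big(G[V(B)\cup\{x\}]\cup\{ax\}\big)\le 2$. Let $G'$ be obtained from $G$ by contracting $B$ into $a$ (replacing $V(B)$ by the single vertex $a$ adjacent to all of $N_G(V(B))$). Then $(G,t)$ has a solution if and only if $(G',t)$ has a solution.
   Context: $\mathrm{tw}$ is treewidth. A solution for $(G,t)$ is $S\subseteq V(G)$ with $|S|\le t$ and $\mathrm{tw}(G-S)\le 2$. A modulator of $G$ is $X$ with $\mathrm{tw}(G-X)\le 2$. $Z$ is a limit-1 subset for $(G,t)$ if every solution $S$ has $|Z\setminus S|\le 1$. $(G,t)$ is trivial if $|V(G)|\le 4$, or $\mathrm{tw}(G)\le 2$, or $t=0$, or some connected subgraph $H$ satisfies $\mathrm{tw}\big(G[N_G[H]]\cup\binom{N_G(H)}{2}\big)\le 2$ ($N_G(H)$: vertices outside $H$ adjacent to $H$; $N_G[H]=V(H)\cup N_G(H)$; $\cup\binom{N_G(H)}{2}$ adds all edges among $N_G(H)$); otherwise non-trivial. For $U\subseteq V(G)$, $N_G(U)$ is the set of vertices outside $U$ adjacent to $U$. A block of a connected graph is a maximal biconnected subgraph (biconnected = connected without articulation vertex); the block-cut tree of a connected graph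 $C$ is the bipartite tree whose nodes are the articulation vertices of $C$ and the blocks of $C$, with articulation vertex $a$ adjacent to block $B$ iff $a\in V(B)$. For a graph $F$ and vertex pair $ax$, $F\cup\{ax\}$ is $F$ with edge $ax$ added. *)

From mathcomp Require Import all_boot.
Set Implicit Arguments. Unset Strict Implicit. Unset Printing Implicit Defensive.

Section Graphs.
Variable T : finType.

(* A graph: a vertex set and a relation; its (simple, undirected) edge set is
   the symmetric closure of the relation restricted to distinct vertices. *)
Record sgraph := SGraph { verts : {set T}; rel_of : rel T }.

Definition edge (G : sgraph) (x y : T) : bool :=
  [&& x \in verts G, y \in verts G, x != y & (rel_of G x y || rel_of G y x)].

Definition induced (G : sgraph) (S : {set T}) : sgraph :=
  SGraph (verts G :&: S) (rel_of G).
Definition delete (G : sgraph) (S : {set T}) : sgraph :=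
  SGraph (verts G :\: S) (rel_of G).
Definition add_edges (G : sgraph) (P : rel T) : sgraph :=
  SGraph (verts G) (fun x y => rel_of G x y || P x y).

Definition nbh (G : sgraph) (U : {set T}) : {set T} :=
  [set y in verts G :\: U | [exists x in U, edge G x y]].
Definition cnbh (G : sgraph) (U : {set T}) : {set T} := U :|: nbh G U.

Definition connected (G : sgraph) : Prop :=
  verts G != set0 /\
  forall x y, x \in verts G -> y \in verts G -> connect (edge G) x y.

Definition articulation (H : sgraph) (v : T) : Prop :=
  v \in verts H /\
  exists x y, [/\ x \in verts H :\ v, y \in verts H :\ v &
                  ~~ connect (edge (delete H [set v])) x y].

Definition biconnected (H : sgraph) : Prop :=
  connected H /\ forall v, ~ articulation H v.

(* the vertex set of a block of the connected graph G[C]: a maximal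
   biconnected subgraph (maximal biconnected subgraphs are induced, so they
   are determined by their vertex set) *)
Definition block (G : sgraph) (C B : {set T}) : Prop :=
  B \subset C /\ biconnected (induced G B) /\
  forall B' : {set T}, B \proper B' -> B' \subset C -> ~ biconnected (induced G B').

Definition component (G : sgraph) (C : {set T}) : Prop :=
  C \subset verts G /\ connected (induced G C) /\ nbh G C = set0.

(* In the block-cut tree of the connected graph G[C], the block B is a leaf
   whose unique neighbour is the articulation vertex a: the neighbours of B
   in the block-cut tree are exactly the articulation vertices of G[C]
   lying in B. *)
Definition bc_leaf (G : sgraph) (C B : {set T}) (a : T) : Prop :=
  [/\ block G C B, articulation (induced G C) a, a \in B &
      forall a', articulation (induced G C) a' -> a' \in B -> a' = a].

End Graphs.

Definition is_tree (I : finType) (r : rel I) : Prop :=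
  [/\ 0 < #|I|, symmetric r, irreflexive r,
      forall i j, connect r i j &
      #|[set p : I * I | r p.1 p.2]| = 2 * (#|I| - 1)].

Section Treewidth.
Variable T : finType.

Definition tree_decomposition (G : sgraph T) (I : finType) (r : rel I)
    (bag : I -> {set T}) : Prop :=
  [/\ is_tree r,
      forall i, bag i \subset verts G,
      forall v, v \in verts G -> exists i, v \in bag i,
      forall x y, edge G x y -> exists i, (x \in bag i) && (y \in bag i) &
      forall v i j, v \in bag i -> v \in bag j ->
        connect [rel k l | [&& r k l, v \in bag k & v \in bag l]] i j].

Definition tw_le (G : sgraph T) (k : nat) : Prop :=
  exists (I : finType) (r : rel I) (bag : I -> {set T}),
    tree_decomposition G r bag /\ forall i, #|bag i| <= k.+1.

Definition solution (G : sgraph T) (t : nat) (S : {set T}) : Prop :=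
  [/\ S \subset verts G, #|S| <= t & tw_le (delete G S) 2].

Definition modulator (G : sgraph T) (X : {set T}) : Prop :=
  X \subset verts G /\ tw_le (delete G X) 2.

Definition limit1 (G : sgraph T) (t : nat) (Z : {set T}) : Prop :=
  forall S, solution G t S -> #|Z :\: S| <= 1.

(* (G,t) is trivial; a connected subgraph H is represented by its vertex set U
   (only V(H) matters for N_G(H), N_G[H]) *)
Definition trivial_instance (G : sgraph T) (t : nat) : Prop :=
  [\/ #|verts G| <= 4, tw_le G 2, t = 0 |
      exists U : {set T}, [/\ U \subset verts G, connected (induced G U) &
        tw_le (add_edges (induced G (cnbh G U))
                 (fun x y => (x \in nbh G U) && (y \in nbh G U))) 2]].

Definition contract (G : sgraph T) (VB : {set T}) (a : T) : sgraph T :=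
  SGraph ((verts G :\: VB) :|: [set a])
    (fun x y => [&& rel_of G x y, x \notin VB & y \notin VB]
                || ((x == a) && (y \in nbh G VB))).

End Treewidth.

From mathcomp Require Import all_boot zify.
Set Implicit Arguments. Unset Strict Implicit. Unset Printing Implicit Defensive.

(* If a solution S of G misses B, contracting the connected set B into a does
   not increase the treewidth of G - S; if S meets B, trading S ∩ B for a gives
   a solution of G' that is no larger.  Conversely, a solution S of G' restricts
   to the solution S \ a of G - B, so by the limit-1 hypothesis at most one
   vertex z of W survives in G - S.  Then G - S is covered by G' - S and by
   G[B ∪ {z}] plus the edge az, two graphs of treewidth at most 2 meeting only in
   the clique {a, z} \ S; tree decompositions of the two are joined through
   bags containing that clique. *)

Lemma homo_connect (A B : finType) (e : rel A) (e' : rel B) (f : A -> B) :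
  (forall x y, e x y -> e' (f x) (f y)) ->
  forall x y, connect e x y -> connect e' (f x) (f y).
Proof.
move=> ee' x y /connectP[p + ->]; elim: p x => [|z p IHp] x /=; first by rewrite connect0.
by case/andP=> /ee' exz /IHp; apply: connect_trans (connect1 exz).
Qed.

Lemma card_rel_pairs (I J : finType) (r : I -> J -> bool) :
  #|[set p : I * J | r p.1 p.2]| = \sum_i \sum_j r i j.
Proof.
rewrite -sum1dep_card big_mkcond pair_bigA /=.
by apply: eq_bigr => -[i j] _; case: (r i j).
Qed.

Section TreeJoin.
Variables (I1 I2 : finType) (r1 : rel I1) (r2 : rel I2) (i1 : I1) (i2 : I2).

Definition tree_join (p q : I1 + I2) : bool :=
  match p, q with
  | inl i, inl j => r1 i j
  | inr i, inr j => r2 i j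
  | inl i, inr j | inr j, inl i => (i == i1) && (j == i2)
  end.

Lemma is_tree_join : is_tree r1 -> is_tree r2 -> is_tree tree_join.
Proof.
move=> [n1 sym1 irr1 conn1 card1] [n2 sym2 irr2 conn2 card2]; split.
- by rewrite card_sum addn_gt0 n1.
- by case=> [i|i] [j|j] //=; rewrite ?sym1 ?sym2.
- by case=> [i|i] /=; rewrite ?irr1 ?irr2.
- have c1 i j : connect tree_join (inl i) (inl j) by apply: homo_connect (conn1 i j).
  have c2 i j : connect tree_join (inr i) (inr j) by apply: homo_connect (conn2 i j).
  have e12 : tree_join (inl i1) (inr i2) by rewrite /= !eqxx.
  have e21 : tree_join (inr i2) (inl i1) by rewrite /= !eqxx.
  case=> [i|i] [j|j] //.
  + exact: connect_trans (c1 i i1) (connect_trans (connect1 e12) (c2 i2 j)).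
  + exact: connect_trans (c2 i i2) (connect_trans (connect1 e21) (c1 i1 j)).
- have sum_split (F : I1 + I2 -> nat) :
      \sum_p F p = \sum_i F (inl i) + \sum_i F (inr i) by rewrite big_sumType.
  rewrite card_rel_pairs card_sum sum_split.
  under eq_bigr => i _ do rewrite sum_split.
  under [X in _ + X]eq_bigr => i _ do rewrite sum_split.
  rewrite /= !big_split /= -!card_rel_pairs card1 card2.
  have -> : [set p : I1 * I2 | (p.1 == i1) && (p.2 == i2)] = [set (i1, i2)].
    by apply/setP => -[i j]; rewrite !inE xpair_eqE.
  have -> : [set p : I2 * I1 | (p.2 == i1) && (p.1 == i2)] = [set (i2, i1)].
    by apply/setP => -[i j]; rewrite !inE xpair_eqE andbC.
  rewrite !cards1 -(prednK n1) -(prednK n2); lia.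
Qed.
End TreeJoin.

Section Graphs.
Variable T : finType.
Implicit Types (G H : sgraph T) (S U K : {set T}).

Lemma edgeC G : symmetric (edge G).
Proof. by move=> x y; rewrite /edge eq_sym orbC andbCA. Qed.

Lemma edge_verts G x y : edge G x y -> (x \in verts G) && (y \in verts G).
Proof. by case/and4P=> -> ->. Qed.

Lemma edge_delete G S x y :
  edge (delete G S) x y = [&& x \notin S, y \notin S & edge G x y].
Proof.
rewrite /edge /= !inE.
by case: (x \in S); case: (y \in S); case: (x \in verts G); case: (y \in verts G).
Qed.

Lemma edge_induced G S x y :
  edge (induced G S) x y = [&& x \in S, y \in S & edge G x y].
Proof.
rewrite /edge /= !inE.
by case: (x \in S); case: (y \in S); case: (x \in verts G); case: (y \in verts G).
Qed.

Lemma edge_add_edges G (P : rel T) x y :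
  edge (add_edges G P) x y =
  edge G x y || [&& x \in verts G, y \in verts G, x != y & P x y || P y x].
Proof. by rewrite /edge /= -!andb_orr orbACA. Qed.

Lemma in_nbh G U y :
  (y \in nbh G U) = [&& y \notin U, y \in verts G & [exists x in U, edge G x y]].
Proof. by rewrite !inE andbA. Qed.

Lemma edge_contract G U a x y : a \in U ->
  edge (contract G U a) x y =
  [&& x \notin U, y \notin U & edge G x y]
  || (x == a) && (y \in nbh G U) || (y == a) && (x \in nbh G U).
Proof.
move=> aU; rewrite /edge /= !inE.
case: (eqVneq x a) => [->|xa]; case: (eqVneq y a) => [->|ya]; rewrite ?aU //=;
  case: (x \in U); case: (y \in U); case: (x \in verts G); case: (y \in verts G);
  by rewrite /= ?andbF ?orbF ?andbT ?orbT ?xa ?ya.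
Qed.

Definition subgraph H H' : Prop :=
  verts H \subset verts H' /\ forall x y, edge H x y -> edge H' x y.

Lemma subgraph_delete H S : subgraph (delete H S) H.
Proof. by split=> [|x y]; [apply: subsetDl | rewrite edge_delete => /and3P[]]. Qed.

Definition sgraph_union H1 H2 : sgraph T :=
  SGraph (verts H1 :|: verts H2) (fun x y => edge H1 x y || edge H2 x y).

Lemma edge_union H1 H2 x y :
  edge (sgraph_union H1 H2) x y = edge H1 x y || edge H2 x y.
Proof.
apply/idP/idP => [/and4P[_ _ _]|e]; first by rewrite /= (edgeC H1 y) (edgeC H2 y) orbb.
have /andP[xV yV] : (x \in verts H1 :|: verts H2) && (y \in verts H1 :|: verts H2).
  by rewrite !inE; case/orP: e => /edge_verts/andP[-> ->]; rewrite ?orbT.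
apply/and4P; split=> //=; last by rewrite e.
by case/orP: e => /and4P[].
Qed.

Definition tw_le_at H k K : Prop :=
  exists (I : finType) (r : rel I) (bag : I -> {set T}),
    [/\ tree_decomposition H r bag, forall i, #|bag i| <= k.+1 &
        exists i, K \subset bag i].

Lemma tw_le_at_set0 H k : tw_le H k -> tw_le_at H k set0.
Proof.
move=> [I [r [bag [td szb]]]]; exists I, r, bag; split=> //.
by case: td => -[/card_gt0P[i _] _ _ _ _] _ _ _ _; exists i; rewrite sub0set.
Qed.

Lemma tw_le_at_subgraph H H' k K :
  subgraph H H' -> K \subset verts H -> tw_le_at H' k K -> tw_le_at H k K.
Proof.
move=> [sV sE] sK [I [r [bag [[tr _ cov cover_edge conn] szb [i0 Ki0]]]]].
exists I, r, (fun i => bag i :&: verts H); split.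
- split=> //.
  + by move=> i; apply: subsetIr.
  + move=> v vH; have [i vi] := cov v (subsetP sV v vH).
    by exists i; rewrite inE vi.
  + move=> x y exy; have [i /andP[xi yi]] := cover_edge _ _ (sE _ _ exy).
    by case/andP: (edge_verts exy) => xH yH; exists i; rewrite !inE xi yi xH yH.
  + move=> v i j; rewrite !inE => /andP[vi vH] /andP[vj _].
    apply: (homo_connect (f := id) _ (conn v i j vi vj)) => k1 l1 /=.
    by rewrite !inE vH !andbT.
- by move=> i; apply: leq_trans (szb i); apply/subset_leq_card/subsetIl.
- by exists i0; rewrite subsetI Ki0.
Qed.

Lemma tw_le_subgraph H H' k : subgraph H H' -> tw_le H' k -> tw_le H k.
Proof.
move=> sH /tw_le_at_set0 /(tw_le_at_subgraph sH (sub0set _)).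
by case=> I [r [bag [td szb _]]]; exists I, r, bag.
Qed.

Lemma tw_le_at_clique H k K :
  tw_le H k -> K \subset verts H -> #|K| <= 2 ->
  {in K &, forall x y, x != y -> edge H x y} -> tw_le_at H k K.
Proof.
move=> twH sK Kle2 cK; have [I [r [bag [td szb]]]] := twH.
suff [i Ki] : exists i, K \subset bag i by exists I, r, bag; split=> //; exists i.
case: td => -[/card_gt0P[i0 _] _ _ _ _] _ cov cover_edge _.
move: Kle2; rewrite leq_eqVlt ltnS leq_eqVlt ltnS leqn0 orbA.
case/orP=> [/orP[/cards2P[x [y [xy defK]]] | /cards1P[x defK]] | /eqP/cards0_eq ->].
- have Kx : x \in K by rewrite defK !inE eqxx.
  have Ky : y \in K by rewrite defK !inE eqxx orbT.
  have [i /andP[xi yi]] := cover_edge _ _ (cK _ _ Kx Ky xy).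
  by exists i; rewrite defK subUset !sub1set xi yi.
- have [i xi] := cov x (subsetP sK x ltac:(by rewrite defK set11)).
  by exists i; rewrite defK sub1set.
- by exists i0; rewrite sub0set.
Qed.

Lemma star_pair K a x y : #|K| <= 1 ->
  x \in a |: K -> y \in a |: K -> x != y ->
  (x == a) && (y \in K) || (y == a) && (x \in K).
Proof.
move=> K1; rewrite !inE; case: (eqVneq x a) => [-> _|xa /= xK].
  by case: (eqVneq y a) => [->|_ /= ->]; rewrite ?eqxx.
case: (eqVneq y a) => [->|ya /= yK xy]; first by rewrite xK.
suff : #|[set x; y]| <= #|K| by rewrite cards2 xy => /leq_trans/(_ K1).
by apply/subset_leq_card; rewrite subUset !sub1set xK yK.
Qed.

Lemma tw_le_at_star H k a Z K :
  tw_le H k -> K \subset verts H -> K \subset a |: Z -> #|Z| <= 1 ->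
  (forall z, a \in K -> z \in K -> z \in Z -> z != a -> edge H a z) ->
  tw_le_at H k K.
Proof.
move=> twH sKH sKaZ Z1 star; apply: tw_le_at_clique => //.
  apply: leq_trans (subset_leq_card sKaZ) _.
  by rewrite cardsU1 (leq_add (leq_b1 _) Z1).
move=> x y xK yK xy.
have /orP[] := star_pair Z1 (subsetP sKaZ x xK) (subsetP sKaZ y yK) xy.
  by case/andP=> /eqP xa yZ; rewrite xa in xK xy *; apply: star; rewrite // eq_sym.
by case/andP=> /eqP ya xZ; rewrite edgeC; rewrite ya in yK xy *; apply: star.
Qed.

Lemma tw_le_union H1 H2 k K :
  tw_le_at H1 k K -> tw_le_at H2 k K -> verts H1 :&: verts H2 \subset K ->
  tw_le (sgraph_union H1 H2) k.
Proof.
move=> [I1 [r1 [b1 [[tr1 sub1 cov1 cedge1 conn1] sz1 [i1 K1]]]]].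
move=> [I2 [r2 [b2 [[tr2 sub2 cov2 cedge2 conn2] sz2 [i2 K2]]]]] sK.
pose bag p := match p with inl i => b1 i | inr j => b2 j end.
exists (I1 + I2)%type, (tree_join r1 r2 i1 i2), bag; split; last by case.
split; first exact: is_tree_join.
- by case=> i /=; [rewrite (subset_trans (sub1 i)) ?subsetUl|
                    rewrite (subset_trans (sub2 i)) ?subsetUr].
- move=> v; rewrite inE => /orP[/cov1[i vi] | /cov2[i vi]];
    by [exists (inl i) | exists (inr i)].
- move=> x y; rewrite edge_union => /orP[/cedge1[i xyi] | /cedge2[i xyi]];
    by [exists (inl i) | exists (inr i)].
- pose e v := [rel p q | [&& tree_join r1 r2 i1 i2 p q, v \in bag p & v \in bag q]].
  have c1 v i j : v \in b1 i -> v \in b1 j -> connect (e v) (inl i) (inl j).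
    by move=> vi vj; apply: homo_connect (conn1 v i j vi vj).
  have c2 v i j : v \in b2 i -> v \in b2 j -> connect (e v) (inr i) (inr j).
    by move=> vi vj; apply: homo_connect (conn2 v i j vi vj).
  have c12 v i j : v \in b1 i -> v \in b2 j -> connect (e v) (inl i) (inr j).
    move=> vi vj; have vK : v \in K.
      by apply: (subsetP sK); rewrite inE (subsetP (sub1 i)) ?(subsetP (sub2 j)).
    have [v1 v2] := (subsetP K1 v vK, subsetP K2 v vK).
    apply: connect_trans (c1 _ _ _ vi v1) (connect_trans _ (c2 _ _ _ v2 vj)).
    by apply: connect1; rewrite /= !eqxx v1 v2.
  have [_ sym_join _ _ _] := is_tree_join i1 i2 tr1 tr2.
  have sym_e v : connect_sym (e v).
    by apply: sym_connect_sym => p q /=; rewrite sym_join [(v \in bag p) && _]andbC.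
  move=> v [i|i] [j|j] /= vi vj; [exact: c1 | exact: c12 | | exact: c2].
  by rewrite sym_e; apply: c12.
Qed.

Section Contraction.
Variables (H : sgraph T) (U : {set T}) (a : T).
Hypothesis aU : a \in U.
Variables (I : finType) (r : rel I) (bag : I -> {set T}).

Definition contract_bag i : {set T} :=
  if U :&: bag i != set0 then (bag i :\: U) :|: [set a] else bag i.

Lemma mem_contract_bag v i : (v \in contract_bag i) =
  if v \in U then (v == a) && (U :&: bag i != set0) else v \in bag i.
Proof.
rewrite /contract_bag; case: ifP => meet; rewrite ?inE.
  case vU: (v \in U); rewrite /= ?andbT // orbC.
  by case: eqP vU => [-> | _]; rewrite ?aU.
case vU: (v \in U); rewrite ?andbF //; apply: contraFF meet => vi.
by apply/set0Pn; exists v; rewrite inE vU.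
Qed.

Lemma contract_bag_a v i : v \in U -> v \in bag i -> a \in contract_bag i.
Proof.
move=> vU vi; rewrite mem_contract_bag aU eqxx.
by apply/set0Pn; exists v; rewrite inE vU.
Qed.

Lemma card_contract_bag i : #|contract_bag i| <= #|bag i|.
Proof.
rewrite /contract_bag; case: ifP => // meet.
rewrite cardsU cards1 cardsD setIC.
have := subset_leq_card (subsetIl (bag i) U).
by move: meet; rewrite -card_gt0 setIC; lia.
Qed.

Hypotheses (sUH : U \subset verts H) (connU : connected (induced H U)).
Hypothesis tdH : tree_decomposition H r bag.

Let a_subtree := [rel k l | [&& r k l, a \in contract_bag k & a \in contract_bag l]].

(* The bags containing a form a subtree because U is connected: follow a path
   of U, passing between bags that hold consecutive vertices of the path. *)
Lemma connect_subtree_a i j u w : u \in U -> w \in U ->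
  connect (edge (induced H U)) u w -> u \in bag i -> w \in bag j ->
  connect a_subtree i j.
Proof.
case: tdH => _ _ _ cover_edge conn_bag uU wU /connectP[p].
have lift v k l : v \in U -> v \in bag k -> v \in bag l -> connect a_subtree k l.
  move=> vU vk vl; apply: (homo_connect (f := id) _ (conn_bag v k l vk vl)) => k' l' /=.
  by case/and3P=> -> /(contract_bag_a vU) -> /(contract_bag_a vU) ->.
elim: p u i uU => [|z p IHp] u i uU /=; first by move=> _ -> ui wj; apply: lift ui wj.
case/andP; rewrite edge_induced => /and3P[_ zU /cover_edge[m /andP[um zm]]] pth wl ui wj.
exact: connect_trans (lift _ _ _ uU ui um) (IHp _ _ zU pth wl zm wj).
Qed.

Lemma contract_decomposition : tree_decomposition (contract H U a) r contract_bag.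
Proof.
have [tr sub cov cover_edge conn_bag] := tdH.
have aH : a \in verts H by apply: (subsetP sUH).
split=> //.
- move=> i; apply/subsetP => v; rewrite mem_contract_bag !inE.
  case: ifP => vU; first by case/andP => ->.
  by move/(subsetP (sub i)) => ->.
- move=> v; rewrite !inE => /orP[/andP[vU vH] | /eqP->].
    by have [i vi] := cov v vH; exists i; rewrite mem_contract_bag (negbTE vU).
  by have [i ai] := cov a aH; exists i; apply: contract_bag_a ai.
- have near_a v : v \in nbh H U ->
      exists i, (a \in contract_bag i) && (v \in contract_bag i).
    rewrite in_nbh => /and3P[vU _ /existsP[u /andP[uU /cover_edge[i /andP[ui vi]]]]].
    by exists i; rewrite (contract_bag_a uU ui) mem_contract_bag (negbTE vU).
  move=> x y; rewrite edge_contract //.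
  case/orP=> [/orP[/and3P[xU yU /cover_edge[i /andP[xi yi]]] | /andP[/eqP-> /near_a//]] |].
    by exists i; rewrite !mem_contract_bag (negbTE xU) (negbTE yU) xi yi.
  by case/andP=> /eqP-> /near_a[i /andP[ai xi]]; exists i; rewrite ai xi.
- move=> v i j; rewrite !mem_contract_bag; case: ifP => vU; last first.
    move=> vi vj; apply: (homo_connect (f := id) _ (conn_bag v i j vi vj)) => k l /=.
    by rewrite !mem_contract_bag vU.
  case/andP=> /eqP-> /set0Pn[u]; rewrite inE => /andP[uU ui].
  case/andP=> _ /set0Pn[w]; rewrite inE => /andP[wU wj].
  apply: (connect_subtree_a uU wU _ ui wj); apply: (proj2 connU);
    by rewrite /= inE (subsetP sUH).
Qed.

End Contraction.

Lemma tw_le_contract H U a k :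
  U \subset verts H -> connected (induced H U) -> a \in U ->
  tw_le H k -> tw_le (contract H U a) k.
Proof.
move=> sUH connU aU [I [r [bag [tdH szb]]]]; exists I, r, (contract_bag U a bag).
split; first exact: contract_decomposition.
by move=> i; apply: leq_trans (szb i); apply: card_contract_bag.
Qed.

End Graphs.

Section LeafBlockReduction.
Variables (T : finType) (G : sgraph T) (t : nat) (B : {set T}) (a : T).
Hypotheses (sBG : B \subset verts G) (aB : a \in B).

Lemma solution_contract_meet (S : {set T}) :
  solution G t S -> ~~ [disjoint B & S] -> solution (contract G B a) t (a |: (S :\: B)).
Proof.
move=> [sSG S_t twS] BS; split.
- rewrite subUset sub1set !inE eqxx orbT /=.
  by apply/subsetP => v; rewrite !inE => /andP[-> /(subsetP sSG)->].
- apply: leq_trans S_t; rewrite cardsU1 cardsD.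
  have := subset_leq_card (subsetIl S B).
  move: BS (leq_b1 (a \notin S :\: B)); rewrite -setI_eq0 -card_gt0 setIC; lia.
- apply: tw_le_subgraph twS; split.
    apply/subsetP => v; rewrite !inE negb_or negb_and negbK.
    by case: (v == a); case: (v \in B); case: (v \in S); case: (v \in verts G).
  move=> x y; rewrite !edge_delete edge_contract // !inE !negb_or.
  case/and3P=> /andP[xa xSB] /andP[ya ySB].
  rewrite (negbTE xa) (negbTE ya) !orbF => /and3P[xB yB ->].
  by move: xSB ySB; rewrite xB yB /= => -> ->.
Qed.

Hypothesis connB : connected (induced G B).

Lemma solution_contract_disjoint (S : {set T}) :
  solution G t S -> [disjoint B & S] -> solution (contract G B a) t S.
Proof.
move=> [sSG S_t twS] BS; have notS v : v \in B -> v \notin S.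
  by move=> vB; rewrite (disjointFr BS vB).
split=> //.
- apply/subsetP => v vS; rewrite !inE (subsetP sSG) // andbT.
  by rewrite (contraL (notS v) vS).
- apply: (tw_le_subgraph (H' := contract (delete G S) B a)); last first.
    apply: tw_le_contract aB twS.
      by apply/subsetP => v vB; rewrite !inE notS // (subsetP sBG).
    suff -> : induced (delete G S) B = induced G B by [].
    congr SGraph; apply/setP => v; rewrite !inE.
    by case vB: (v \in B); rewrite ?andbF ?notS.
  have nbhS y : y \notin S -> y \in nbh G B -> y \in nbh (delete G S) B.
    rewrite !in_nbh /= inE => yS /and3P[-> -> /existsP[u /andP[uB e]]].
    by rewrite yS; apply/existsP; exists u; rewrite uB edge_delete notS // yS e.
  split.
    apply/subsetP => v; rewrite !inE.
    by case: (v \in S); case: (v \in B); case: (v == a); case: (v \in verts G).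
  move=> x y; rewrite edge_delete !edge_contract // edge_delete => /and3P[xS yS].
  case/orP=> [/orP[/and3P[-> -> e] | /andP[-> /(nbhS _ yS) ->]] |
              /andP[-> /(nbhS _ xS) ->]]; by rewrite ?xS ?yS ?e ?orbT.
Qed.

Let W := nbh G (B :\ a) :\ a.

Lemma in_W x :
  (x \in W) = [&& x \notin B, x \in verts G & [exists u in B :\ a, edge G u x]].
Proof. by rewrite !inE; case: eqVneq => [->|_]; rewrite ?aB //= andbA. Qed.

Lemma W_nbh x : x \in W -> x \in nbh G B.
Proof.
rewrite in_W in_nbh => /and3P[-> -> /existsP[u /andP[uBa e]]].
by apply/existsP; exists u; rewrite (subsetP (subD1set B a)).
Qed.

Lemma edge_W u v : u \in B -> u != a -> v \notin B -> edge G u v -> v \in W.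
Proof.
move=> uB ua vB e; rewrite in_W vB (andP (edge_verts e)).2.
by apply/existsP; exists u; rewrite !inE ua uB e.
Qed.

Hypotheses (twB : tw_le (induced G B) 2) (limW : limit1 (delete G B) t W).
Hypothesis twW : forall x, x \in W ->
  tw_le (add_edges (induced G (B :|: [set x])) (fun u w => (u == a) && (w == x))) 2.

Definition leaf_part (Z : {set T}) : sgraph T :=
  add_edges (induced G (B :|: Z)) (fun u w => (u == a) && (w \in Z)).

Lemma tw_leaf_part (Z : {set T}) : Z \subset W -> #|Z| <= 1 -> tw_le (leaf_part Z) 2.
Proof.
move=> sZW; rewrite leq_eqVlt ltnS leqn0 => /orP[/cards1P[x defZ] | /eqP/cards0_eq defZ].
  have xW : x \in W by rewrite (subsetP sZW) // defZ set11.
  apply: tw_le_subgraph (twW xW); split; first by rewrite defZ.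
  by move=> u w; rewrite defZ !edge_add_edges !inE.
apply: tw_le_subgraph twB; split; first by rewrite /= defZ setU0.
by move=> u w; rewrite defZ /leaf_part setU0 edge_add_edges !inE !andbF orbF.
Qed.

Lemma limit1_W_contract (S : {set T}) :
  solution (contract G B a) t S -> #|W :\: S| <= 1.
Proof.
move=> [sSG' S_t twS].
have -> : W :\: S = W :\: (S :\ a).
  by apply/setP => v; rewrite !inE; case: eqVneq => [->|]; rewrite ?andbF.
apply: limW; split.
- apply/subsetP => v; rewrite !inE => /andP[va /(subsetP sSG')].
  by rewrite !inE (negbTE va) orbF.
- by apply: leq_trans S_t; apply/subset_leq_card/subsetDl.
- apply: tw_le_subgraph twS; split.
    apply/subsetP => v; rewrite !inE.
    by case: eqVneq => [->|_]; rewrite ?aB ?andbF //= => /and3P[-> -> ->].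
  move=> x y; rewrite !edge_delete edge_contract // !inE => /and3P[xSa ySa /and3P[xB yB e]].
  have [xa ya] : x != a /\ y != a.
    by split; [apply: contraNneq xB | apply: contraNneq yB] => ->.
  by move: xSa ySa; rewrite xa ya /= => -> ->; rewrite xB yB e.
Qed.

Lemma subgraph_uncontract (S : {set T}) :
  subgraph (delete G S)
    (sgraph_union (delete (contract G B a) S) (delete (leaf_part (W :\: S)) S)).
Proof.
set Z := W :\: S; split.
  apply/subsetP => v; rewrite !inE => /andP[vS vV]; rewrite vS vV /=.
  by case: (v \in B); rewrite ?orbT.
have cross u w : u \in B -> u \notin S -> w \notin S -> edge G u w ->
    edge (delete (contract G B a) S) u w || edge (delete (leaf_part Z) S) u w.
  move=> uB uS wS e; rewrite !edge_delete uS wS /=.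
  have leaf_edge : w \in B :|: Z -> edge (leaf_part Z) u w.
    by move=> wBZ; rewrite edge_add_edges edge_induced in_setU uB wBZ e.
  case wB: (w \in B); first by rewrite leaf_edge ?orbT // in_setU wB.
  case: (eqVneq u a) => [ua|ua].
    have wN : w \in nbh G B.
      by rewrite in_nbh wB (andP (edge_verts e)).2; apply/existsP; exists u; rewrite uB e.
    by rewrite edge_contract // ua eqxx wN orbT.
  by rewrite leaf_edge ?orbT // in_setU in_setD wS (edge_W uB ua (negbT wB) e) orbT.
move=> x y; rewrite edge_delete edge_union => /and3P[xS yS e].
case xB: (x \in B); first exact: cross.
case yB: (y \in B).
  by rewrite edgeC [edge (delete (leaf_part Z) S) x y]edgeC; apply: cross; rewrite // edgeC.
by rewrite edge_delete edge_contract // xS yS xB yB e.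
Qed.

Lemma solution_uncontract (S : {set T}) :
  solution (contract G B a) t S -> solution G t S.
Proof.
move=> solS; have Z1 := limit1_W_contract solS; case: solS => sSG' S_t twS.
have aV : a \in verts G by apply: (subsetP sBG).
split=> //.
  apply/subsetP => v /(subsetP sSG'); rewrite !inE.
  by case/orP=> [/andP[_ ->] | /eqP->].
set Z := W :\: S; set K := (a |: Z) :\: S.
have inZ z : z \in Z -> [&& z \notin S, z \notin B & z \in verts G].
  by rewrite in_setD in_W => /andP[-> /and3P[-> -> _]].
apply: tw_le_subgraph (subgraph_uncontract S) _.
apply: (tw_le_union (K := K)).
- apply: (tw_le_at_star (a := a) (Z := Z)) => //.
  + apply/subsetP => v /setDP[vaZ vS]; rewrite !inE vS /=.
    by case/setU1P: vaZ => [->|/inZ/and3P[_ -> ->]]; rewrite ?eqxx ?orbT.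
  + exact: subsetDl.
  + move=> z /setDP[_ aS] _ zZ _; have /and3P[zS _ _] := inZ z zZ.
    by rewrite edge_delete edge_contract // aS zS eqxx W_nbh ?orbT //; case/setDP: zZ.
- apply: (tw_le_at_star (a := a) (Z := Z)) => //.
  + exact: tw_le_subgraph (subgraph_delete _ S) (tw_leaf_part (subsetDl W S) Z1).
  + apply/subsetP => v /setDP[vaZ vS]; rewrite /= in_setD in_setI in_setU vS.
    case/setU1P: vaZ => [->|vZ]; first by rewrite aV aB.
    by case/and3P: (inZ v vZ) => _ _ ->; rewrite vZ orbT.
  + exact: subsetDl.
  + move=> z /setDP[_ aS] _ zZ za; have /and3P[zS _ zV] := inZ z zZ.
    rewrite edge_delete edge_add_edges /= !in_setI !in_setU aS zS aV aB zV zZ.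
    by rewrite eq_sym za eqxx !orbT.
- apply/subsetP => v /setIP[]; rewrite !in_setD => /andP[vS vG'] /andP[_ vL].
  rewrite vS /= in_setU1; case: eqVneq => //= va.
  move: vG' vL; rewrite /= in_setU in_set1 in_setD (negbTE va) orbF => /andP[vB _].
  by rewrite in_setI in_setU (negbTE vB) => /andP[].
Qed.

End LeafBlockReduction.

Theorem mainTheorem16 (T : finType) (G : sgraph T) (t : nat)
    (X C B : {set T}) (a : T) :
  ~ trivial_instance G t ->
  modulator G X ->
  component (delete G X) C ->
  bc_leaf G C B a ->
  limit1 (delete G B) t (nbh G (B :\ a) :\ a) ->
  (forall x, x \in nbh G (B :\ a) :\ a ->
     tw_le (add_edges (induced G (B :|: [set x]))
              (fun u w => (u == a) && (w == x))) 2) ->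
  ((exists S, solution G t S) <-> (exists S, solution (contract G B a) t S)).
Proof.
move=> _ [_ twX] [sCGX _] [[sBC [[connB _] _]] _ aB _] limW twW.
have sBGX : B \subset verts (delete G X) := subset_trans sBC sCGX.
have sBG : B \subset verts G := subset_trans sBGX (subsetDl _ _).
have notX v : v \in B -> v \notin X by move/(subsetP sBGX); rewrite inE => /andP[].
have twB : tw_le (induced G B) 2.
  apply: tw_le_subgraph twX; split.
    by apply/subsetP => v; rewrite inE => /andP[_ /(subsetP sBGX)].
  by move=> x y; rewrite edge_induced edge_delete => /and3P[/notX -> /notX -> ->].
split=> -[S solS].
- case: (boolP [disjoint B & S]) => BS.
    by exists S; apply: solution_contract_disjoint.
  by exists (a |: (S :\: B)); apply: solution_contract_meet.
- by exists S; apply: solution_uncontract solS.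
Qed.
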